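(* Let $F\subset\mathrm{Sym}^2(\mathbb{R}^n)$ be a cone subequation invariant under a subgroup of $\mathrm{O}(n)$ acting transitively on $S^{n-1}$, with Riesz characteristic $p=p_F$ and dual Riesz characteristic $q=q_F$. For $\delta\ge0$ let $F(\delta)=\{A: A+\delta(\mathrm{tr}A)\frac1nI\in F\}$. Then the Riesz characteristics of $F(\delta)$ are given by $$p_{F(\delta)}=\frac{n(1+\delta)p}{n+\delta p}=p+\frac{\delta p(n-p)}{n+\delta p},\qquad q_{F(\delta)}=\frac{n(1+\delta)q}{n+\delta q}=q+\frac{\delta q(n-q)}{n+\delta q}.$$ These formulas also hold when $p_F=\infty$ or $q_F=\infty$, that is, for $\delta>0$: $p_F=\infty\Rightarrow p_{F(\delta)}=\frac{n(1+\delta)}{\delta}$ and $q_F=\infty\Rightarrow q_{F(\delta)}=\frac{n(1+\delta)}{\delta}$.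
   Context: A cone subequation is a closed $F\subset\mathrm{Sym}^2(\mathbb{R}^n)$, $\emptyset\ne F\ne\mathrm{Sym}^2(\mathbb{R}^n)$, with $F+\{A\ge0\}\subset F$ and $tF\subset F$ for $t\ge0$. Its Riesz characteristic is $p_F=\sup\{t:P_{e^\perp}-(t-1)P_e\in F\}$ for a (any) unit vector $e$ ($P_e,P_{e^\perp}$ orthogonal projections onto $\mathbb{R}e$, $e^\perp$). The dual of $F$ is $\widetilde F=\mathrm{Sym}^2(\mathbb{R}^n)\setminus(-\mathrm{Int}\,F)$, and the dual Riesz characteristic is $q_F=p_{\widetilde F}$; for $F(\delta)$, $p_{F(\delta)}$ and $q_{F(\delta)}$ are defined in the same way. *)

From HB Require Import structures.
From mathcomp Require Import all_boot all_order all_algebra.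
From mathcomp Require Import all_classical all_reals ereal.
Set Implicit Arguments. Unset Strict Implicit. Unset Printing Implicit Defensive.
Import Order.TTheory GRing.Theory Num.Theory.
Local Open Scope classical_set_scope.
Local Open Scope ring_scope.

Section Defs.
Variables (R : realType) (n : nat).
Implicit Types (A B : 'M[R]_n) (F : set 'M[R]_n).

Definition symmetric A : Prop := A^T = A.

Definition psd A : Prop :=
  symmetric A /\ forall v : 'rV[R]_n, 0 <= (v *m A *m v^T) 0 0.

Definition near_sym (eps : R) A B : Prop :=
  symmetric B /\ forall i j, `|B i j - A i j| < eps.

Definition closed_sym F : Prop :=
  forall A, symmetric A ->
    (forall eps, 0 < eps -> exists B, F B /\ near_sym eps A B) -> F A.

Definition interior_sym F : set 'M[R]_n :=
  [set A | symmetric A /\ exists eps : R, 0 < eps /\ forall B, near_sym eps A B -> F B].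

Definition cone_subequation F : Prop :=
  F `<=` symmetric /\ closed_sym F /\ F !=set0 /\ F <> symmetric /\
  (forall A P, F A -> psd P -> F (A + P)) /\
  (forall (t : R) A, 0 <= t -> F A -> F (t *: A)).

Definition dual F : set 'M[R]_n :=
  [set A | symmetric A /\ ~ interior_sym F (- A)].

Definition unit_vec (e : 'rV[R]_n) : Prop := (e *m e^T) 0 0 = 1.

Definition Pe (e : 'rV[R]_n) : 'M[R]_n := e^T *m e.
Definition Pperp (e : 'rV[R]_n) : 'M[R]_n := 1%:M - Pe e.

Definition riesz F (e : 'rV[R]_n) : \bar R :=
  ereal_sup ((fun t : R => t%:E) @`
     [set t : R | F (Pperp e - (t - 1) *: Pe e)]).

Definition orth_subgroup (G : set 'M[R]_n) : Prop :=
  [/\ G 1%:M,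
      (forall g, G g -> g *m g^T = 1%:M),
      (forall g h, G g -> G h -> G (g *m h)) &
      (forall g, G g -> G g^T)].

(* G acts transitively on the unit sphere S^{n-1} (action x |-> g x,
   written on row vectors as x |-> x g^T) *)
Definition transitive_sphere (G : set 'M[R]_n) : Prop :=
  forall e1 e2 : 'rV[R]_n, unit_vec e1 -> unit_vec e2 ->
    exists2 g, G g & e1 *m g^T = e2.

Definition invariant_under (G : set 'M[R]_n) F : Prop :=
  forall g A, G g -> F A -> F (g *m A *m g^T).

Definition Fdelta F (delta : R) : set 'M[R]_n :=
  [set A | F (A + (delta * \tr A / n%:R) *: 1%:M)].

End Defs.

(* F(delta) is the preimage of F under the linear isomorphism
   L A = A + delta (tr A / n) I.  On the test matrices it gives
   L (I - t P_e) = c(t) I - t P_e with c(t) = 1 + delta (n - t) / n, so by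
   positive homogeneity I - t P_e lies in F(delta) iff I - (t / c(t)) P_e lies
   in F (when c(t) > 0).  The Riesz set of F is a down-set with supremum p, and
   solving t / c(t) = p gives t = n (1 + delta) p / (n + delta p); when p = oo
   the only constraint left is c(t) > 0, i.e. t < n (1 + delta) / delta.
   Since L is bi-Lipschitz and commutes with A |-> -A, it preserves interiors,
   hence the dual of F(delta) is (dual F)(delta), and the dual of a cone
   subequation is again a psd-monotone cone, so the same computation gives q. *)

From Pilot Require Import Defs.
From HB Require Import structures.
From mathcomp Require Import all_boot all_order all_algebra.
From mathcomp Require Import all_classical all_reals ereal.
From mathcomp Require Import ring lra.
Import Order.TTheory GRing.Theory Num.Theory.
Local Open Scope classical_set_scope.
Local Open Scope ring_scope.
Set Implicit Arguments. Unset Strict Implicit.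

Section EFinSup.
Variable R : realType.
Implicit Types (S : set R) (x y : R).

Lemma ereal_sup_EFin_ub S x t :
  ereal_sup (EFin @` S) = x%:E -> S t -> t <= x.
Proof. by move=> supS St; rewrite -lee_fin -supS; apply: ereal_sup_ubound; exists t. Qed.

Lemma ereal_sup_EFin_gt S y :
  (y%:E < ereal_sup (EFin @` S))%E -> exists2 t, S t & y < t.
Proof. by move=> /ereal_sup_gt[_ [t St <-]]; rewrite lte_fin; exists t. Qed.

Lemma ereal_sup_EFin_eq S x :
  (forall t, S t -> t <= x) -> (forall t, t < x -> S t) ->
  ereal_sup (EFin @` S) = x%:E.
Proof.
move=> ub below_S; apply/eqP; rewrite eq_le; apply/andP; split.
  by apply/ereal_supP => _ [t St <-]; rewrite lee_fin ub.
have below y : y < x -> (y%:E < ereal_sup (EFin @` S))%E.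
  move=> /midf_lt[yt tx]; apply/ereal_sup_gtP.
  by exists ((y + x) / 2)%:E; [exists ((y + x) / 2); first exact: below_S|].
case: (ereal_sup _) below => [r| |] below; rewrite ?leey //.
- by rewrite lee_fin leNgt; apply/negP => /below; rewrite ltxx.
- by have := below (x - 1); rewrite gtrDl ltrN10 => /(_ isT).
Qed.
End EFinSup.

Section PsdFacts.
Variables (R : realType) (n : nat).
Implicit Types (A B M : 'M[R]_n) (v : 'rV[R]_n).

Lemma mulmx_trmx_ge0 m (w : 'rV[R]_m) : 0 <= (w *m w^T) 0 0.
Proof. by rewrite mxE; apply: sumr_ge0 => i _; rewrite mxE -expr2 sqr_ge0. Qed.

Lemma psd1 : psd (1%:M : 'M[R]_n).
Proof. by split=> [|v]; [exact: trmx1 | rewrite mulmx1 mulmx_trmx_ge0]. Qed.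

Lemma psd_scale_Pe (e : 'rV[R]_n) (a : R) : 0 <= a -> psd (a *: Pe e).
Proof.
move=> a0; split; first by rewrite /Defs.symmetric linearZ /= /Pe trmx_mul trmxK.
move=> v; rewrite -scalemxAr -scalemxAl mxE mulr_ge0 //.
rewrite /Pe !mulmxA -[v *m e^T *m e *m v^T]mulmxA -[e *m v^T]trmxK trmx_mul trmxK.
exact: mulmx_trmx_ge0.
Qed.

Lemma riesz_testE (e : 'rV[R]_n) (t : R) :
  Pperp e - (t - 1) *: Pe e = 1%:M - t *: Pe e.
Proof. by rewrite /Pperp scalerBl scale1r opprB addrA subrK. Qed.

Lemma trace_Pe (e : 'rV[R]_n) : unit_vec e -> \tr (Pe e) = 1.
Proof. by move=> ue; rewrite /Pe mxtrace_mulC /mxtrace big_ord1. Qed.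

Lemma quad_form_bound M v :
  `|(v *m M *m v^T) 0 0| <= (\sum_j \sum_i `|M i j|) * (v *m v^T) 0 0.
Proof.
set S := (v *m v^T) 0 0.
have sqr_le k : v 0 k * v 0 k <= S.
  rewrite /S mxE (bigD1 k) //= mxE ler_wpDr //.
  by apply: sumr_ge0 => i _; rewrite mxE -expr2 sqr_ge0.
rewrite mxE mulr_suml; apply: le_trans (ler_norm_sum _ _ _) _.
apply: ler_sum => j _; rewrite mxE mulr_suml mulr_suml.
apply: le_trans (ler_norm_sum _ _ _) _.
apply: ler_sum => i _; rewrite mxE !normrM mulrC mulrA mulrC ler_wpM2l //.
have normsq k : `|v 0 k| * `|v 0 k| = v 0 k * v 0 k.
  by rewrite -normrM ger0_norm // -expr2 sqr_ge0.
have := sqr_le i; have := sqr_le j; rewrite -!normsq.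
have := normr_ge0 (v 0 i); have := normr_ge0 (v 0 j).
clearbody S; nra.
Qed.

Lemma psd_add_entry_sum A :
  Defs.symmetric A -> psd (A + (\sum_j \sum_i `|A i j|) *: 1%:M).
Proof.
move=> sA; split; first by rewrite /Defs.symmetric linearD linearZ /= trmx1 sA.
move=> v; rewrite mulmxDr mulmxDl -scalemxAr -scalemxAl mulmx1 mxE [X in _ + X]mxE.
have := quad_form_bound A v; rewrite ler_norml => /andP[lb _].
by rewrite -(opprK (_ * _)) subr_ge0.
Qed.

Lemma near_sym1_psd B : (0 < n)%N -> near_sym ((n * n)%:R^-1) 1%:M B -> psd B.
Proof.
move=> n_gt0 [sB nearB]; split=> // v.
have -> : B = 1%:M + (B - 1%:M) by rewrite addrC subrK.
rewrite mulmxDr mulmxDl mulmx1 mxE.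
have sum_le1 : \sum_j \sum_i `|(B - 1%:M) i j| <= 1.
  apply: (@le_trans _ _ (\sum_(j < n) \sum_(i < n) (n * n)%:R^-1)).
    apply: ler_sum => j _; apply: ler_sum => i _; apply: ltW.
    by have := nearB i j; rewrite !mxE.
  rewrite !sumr_const !card_ord -mulrnA -[X in X <= 1]mulr_natr mulVf //.
  by rewrite pnatr_eq0 -lt0n muln_gt0 n_gt0.
have := quad_form_bound (B - 1%:M) v; rewrite ler_norml => /andP[lb _].
have := ler_wpM2r (mulmx_trmx_ge0 v) sum_le1; rewrite mul1r.
lra.
Qed.
End PsdFacts.
Arguments psd1 {R n}.

Section Cones.
Variables (R : realType) (n : nat).
Implicit Types (A B P : 'M[R]_n) (H : set 'M[R]_n).

Definition psd_monotone_cone H : Prop :=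
  [/\ H 0, (forall A P, H A -> psd P -> H (A + P)),
      (forall (c : R) A, 0 < c -> H A -> H (c *: A)) & ~ H (- 1%:M)].

Lemma near_sym_addr (eps : R) A B P :
  Defs.symmetric P -> near_sym eps A B -> near_sym eps (A + P) (B + P).
Proof.
move=> sP [sB nearB]; split=> [|i j].
  by rewrite /Defs.symmetric linearD /= sB sP.
by rewrite !mxE opprD addrACA subrr addr0.
Qed.

Lemma near_sym_scale (c eps : R) A B :
  0 < c -> near_sym eps A B -> near_sym (c * eps) (c *: A) (c *: B).
Proof.
move=> c_gt0 [sB nearB]; split=> [|i j].
  by rewrite /Defs.symmetric linearZ /= sB.
by rewrite !mxE -mulrBr normrM gtr0_norm // ltr_pM2l.
Qed.

Section Interior.
Variable H : set 'M[R]_n.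
Hypotheses (H_add_psd : forall A P, H A -> psd P -> H (A + P))
  (H_scale : forall (c : R) A, 0 < c -> H A -> H (c *: A)).

Lemma interior_sym_add_psd A P :
  interior_sym H A -> psd P -> interior_sym H (A + P).
Proof.
move=> [sA [eps [eps_gt0 intA]]] [sP P_ge0]; split.
  by rewrite /Defs.symmetric linearD /= sA sP.
exists eps; split=> // B nearB; rewrite -(subrK P B); apply: H_add_psd (conj sP P_ge0).
apply: intA; rewrite -(addrK P A); apply: near_sym_addr nearB.
by rewrite /Defs.symmetric linearN /= sP.
Qed.

Lemma interior_sym_scale (c : R) A :
  0 < c -> interior_sym H A -> interior_sym H (c *: A).
Proof.
move=> c_gt0 [sA [eps [eps_gt0 intA]]]; split.
  by rewrite /Defs.symmetric linearZ /= sA.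
exists (c * eps); split=> [|B nearB]; first exact: mulr_gt0.
have c_neq0 : c != 0 by rewrite gt_eqF.
rewrite -[B](scalerKV c_neq0); apply: H_scale => //; apply: intA.
rewrite -[A](scalerK c_neq0) -[eps](mulKf c_neq0).
by apply: near_sym_scale nearB; rewrite invr_gt0.
Qed.
End Interior.

Lemma psd_monotone_cone_dual H :
  psd_monotone_cone H -> interior_sym H 1%:M -> psd_monotone_cone (dual H).
Proof.
move=> [H0 H_add_psd H_scale Hm1] int1; split.
- split=> [|[_ [eps [eps_gt0 int0]]]]; first by rewrite /Defs.symmetric trmx0.
  apply: Hm1; have eps2_gt0 : 0 < eps / 2 by rewrite divr_gt0.
  have : H (- (eps / 2) *: 1%:M).
    apply: int0; split=> [|i j]; first by rewrite /Defs.symmetric linearZ /= trmx1.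
    rewrite !mxE oppr0 subr0; case: eqP => _; last by rewrite mulr0 normr0.
    by rewrite mulr1 normrN gtr0_norm // ltr_pdivrMr // ltr_pMr // ltr1n.
  move/(H_scale (eps / 2)^-1); rewrite invr_gt0 scalerA mulrN mulVf ?gt_eqF //.
  by rewrite scaleN1r; apply.
- move=> A P [sA not_intA] psdP; split.
    by rewrite /Defs.symmetric linearD /= sA psdP.1.
  move=> intAP; apply: not_intA; rewrite -(subrK P (- A)) -opprD.
  exact: interior_sym_add_psd.
- move=> c A c_gt0 [sA not_intA]; split; first by rewrite /Defs.symmetric linearZ /= sA.
  move=> intcA; apply: not_intA; rewrite -[- A](scalerK (lt0r_neq0 c_gt0)) scalerN.
  by apply: interior_sym_scale => //; rewrite invr_gt0.
- by move=> [_]; rewrite opprK.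
Qed.

Section ConeSubequation.
Variable F : set 'M[R]_n.
Hypothesis F_cone : cone_subequation F.

Lemma cone_subequation_psd_monotone : psd_monotone_cone F.
Proof.
have [F_sym [_ [[A FA] [F_proper [F_add_psd F_scale]]]]] := F_cone.
have F0 : F 0 by rewrite -(scale0r A); apply: F_scale.
split=> // [c B c_gt0|Fm1]; first exact/F_scale/ltW.
(* if -I were in F, every symmetric B = -t I + (B + t I) would be *)
apply: F_proper; apply/seteqP; split=> [B /F_sym //|B sB].
set t := \sum_j \sum_i `|B i j|.
have t_ge0 : 0 <= t by apply: sumr_ge0 => j _; apply: sumr_ge0.
have := F_add_psd _ _ (F_scale t _ t_ge0 Fm1) (psd_add_entry_sum sB).
by rewrite scalerN addrC addrK.
Qed.

Lemma cone_subequation_interior1 : (0 < n)%N -> interior_sym F 1%:M.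
Proof.
move=> n_gt0; have [F0 F_add_psd _ _] := cone_subequation_psd_monotone.
split; first exact: trmx1.
exists (n * n)%:R^-1; split=> [|B nearB]; first by rewrite invr_gt0 ltr0n muln_gt0 n_gt0.
by rewrite -[B]add0r; apply/F_add_psd/near_sym1_psd.
Qed.
End ConeSubequation.
End Cones.

Section TraceShift.
Variables (R : realType) (n : nat).
Hypothesis n_gt0 : (0 < n)%N.
Implicit Types (A B X : 'M[R]_n) (F : set 'M[R]_n) (k : R).

Definition trace_shift k X : 'M[R]_n := X + (k * \tr X / n%:R) *: 1%:M.

Let n_neq0 : n%:R != 0 :> R. Proof. by rewrite pnatr_eq0 -lt0n. Qed.

Lemma trace_shift_trace k X : \tr (trace_shift k X) = (1 + k) * \tr X.
Proof. by rewrite mxtraceD mxtraceZ mxtrace1; field. Qed.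

Lemma trace_shiftK a b X :
  trace_shift a (trace_shift b X) = trace_shift (a + b + a * b) X.
Proof.
by apply/matrixP => i j; rewrite [LHS]mxE trace_shift_trace !mxE; field.
Qed.

Lemma trace_shift0 X : trace_shift 0 X = X.
Proof. by rewrite /trace_shift !mul0r scale0r addr0. Qed.

Lemma trace_shiftN k X : trace_shift k (- X) = - trace_shift k X.
Proof. by rewrite /trace_shift raddfN /= mulrN mulNr scaleNr opprD. Qed.

Lemma trace_shift_tr k X : (trace_shift k X)^T = trace_shift k X^T.
Proof. by rewrite /trace_shift linearD linearZ /= trmx1 mxtrace_tr. Qed.

Lemma trace_shift_sym k X :
  Defs.symmetric (trace_shift k X) <-> Defs.symmetric X.
Proof.
rewrite /Defs.symmetric trace_shift_tr /trace_shift mxtrace_tr.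
by split=> [/addIr|->].
Qed.

Lemma near_sym_trace_shift k (eps : R) A B : near_sym eps A B ->
  near_sym ((1 + `|k|) * eps) (trace_shift k A) (trace_shift k B).
Proof.
move=> [sB nearB]; split=> [|i j]; first by rewrite /Defs.symmetric trace_shift_tr sB.
have tr_near : `|\tr B - \tr A| <= n%:R * eps.
  rewrite /mxtrace -sumrB; apply: le_trans (ler_norm_sum _ _ _) _.
  apply: (@le_trans _ _ (\sum_(i < n) eps)); first by apply: ler_sum => l _; apply: ltW.
  by rewrite sumr_const card_ord mulr_natl.
have eps_ge0 : 0 <= eps by apply: le_trans (ltW (nearB i j)).
rewrite /trace_shift !mxE.
rewrite (_ : _ - _ = B i j - A i j + k * ((\tr B - \tr A) / n%:R) * (i == j)%:R);
  last by field.
rewrite [_ * eps]mulrDl mul1r; apply: le_lt_trans (ler_normD _ _) _; rewrite ltr_leD //.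
rewrite !normrM -[X in _ <= X]mulr1 ler_pM ?mulr_ge0 // ?ler_wpM2l //.
  by rewrite normfV (@gtr0_norm _ n%:R) ?ltr0n // ler_pdivrMr ?ltr0n // mulrC.
by case: (i == j); rewrite ?normr1 ?normr0.
Qed.

Lemma interior_sym_trace_shift k F X :
  interior_sym F (trace_shift k X) -> interior_sym (trace_shift k @^-1` F) X.
Proof.
move=> [sX [eps [eps_gt0 intX]]]; split; first exact: (trace_shift_sym k X).1.
have k1_gt0 : 0 < 1 + `|k| by have := normr_ge0 k; lra.
exists (eps / (1 + `|k|)); split=> [|B nearB]; first exact: divr_gt0.
apply: intX; rewrite -[eps](@divfK _ (1 + `|k|)) ?gt_eqF // mulrC.
exact: near_sym_trace_shift.
Qed.

Section Fdelta.
Variable d : R.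
Hypothesis d_ge0 : 0 <= d.

Let d1_neq0 : 1 + d != 0. Proof. by rewrite gt_eqF // ltr_wpDr. Qed.

Lemma trace_shiftK_inv : cancel (trace_shift d) (trace_shift (- (d / (1 + d)))).
Proof.
move=> X; rewrite trace_shiftK (_ : _ + _ = 0) ?trace_shift0 //; field; exact: d1_neq0.
Qed.

Lemma trace_shiftK_invV : cancel (trace_shift (- (d / (1 + d)))) (trace_shift d).
Proof.
move=> X; rewrite trace_shiftK (_ : _ + _ = 0) ?trace_shift0 //; field; exact: d1_neq0.
Qed.

Lemma interior_sym_Fdelta F X :
  interior_sym (Fdelta F d) X <-> interior_sym F (trace_shift d X).
Proof.
split; last exact: interior_sym_trace_shift.
rewrite -{1}[X]trace_shiftK_inv => /interior_sym_trace_shift.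
suff -> : trace_shift (- (d / (1 + d))) @^-1` Fdelta F d = F by [].
by apply/seteqP; split=> A; rewrite /= /Fdelta /= -/(trace_shift d _) trace_shiftK_invV.
Qed.

Lemma dual_Fdelta F : dual (Fdelta F d) = Fdelta (dual F) d.
Proof.
apply/seteqP; split=> A [sA not_int]; split.
- exact/trace_shift_sym.
- by rewrite -trace_shiftN -interior_sym_Fdelta.
- exact: (trace_shift_sym d A).1.
- by rewrite interior_sym_Fdelta trace_shiftN.
Qed.
End Fdelta.
End TraceShift.

Section ShiftArith.
Variables (R : realType) (N d : R).
Implicit Types (c p t : R).

Lemma shift_factor_le0 t : 0 < N -> 0 <= d -> N + d * (N - t) <= 0 -> 0 < t.
Proof.
move=> N_gt0 d_ge0 le0; rewrite ltNge; apply/negP => t_le0.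
have mt_ge0 : 0 <= - t by rewrite oppr_ge0.
have := mulr_ge0 d_ge0 (ltW N_gt0); have := mulr_ge0 d_ge0 mt_ge0; nra.
Qed.

Lemma le_shifted_ratio c p t : 0 < N -> c * N = N + d * (N - t) ->
  t <= p * c -> t * (N + d * p) <= N * (1 + d) * p.
Proof.
move=> N_gt0 cN tp; have := ler_wpM2r (ltW N_gt0) tp.
have : p * c * N = p * (N + d * (N - t)) by rewrite -cN mulrA.
nra.
Qed.

Lemma lt_shifted_ratio c p t : 0 < N -> 0 <= d -> 0 <= p ->
  c * N = N + d * (N - t) ->
  t * (N + d * p) < N * (1 + d) * p -> 0 < c /\ t < p * c.
Proof.
move=> N_gt0 d_ge0 p_ge0 cN lt_t.
have tp : t < p * c by rewrite -(ltr_pM2r N_gt0) -mulrA cN; nra.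
split=> //; rewrite ltNge; apply/negP => c_le0.
have t_lt0 : t < 0 by apply: lt_le_trans tp _; rewrite mulr_ge0_le0.
have : c * N <= 0 by rewrite mulr_le0_ge0 // ltW.
have mt_ge0 : 0 <= - t by rewrite oppr_ge0 ltW.
rewrite cN; have := mulr_ge0 d_ge0 mt_ge0.
have := mulr_ge0 d_ge0 (ltW N_gt0); nra.
Qed.

Lemma le_shift_limit c t : 0 < N -> 0 < d -> c * N = N + d * (N - t) -> 0 <= c ->
  t <= N * (1 + d) / d.
Proof.
move=> N_gt0 d_gt0 cN c_ge0; rewrite ler_pdivlMr //.
have : 0 <= c * N by rewrite mulr_ge0 // ltW.
rewrite cN; nra.
Qed.

Lemma lt_shift_limit c t : 0 < N -> 0 < d -> c * N = N + d * (N - t) ->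
  t < N * (1 + d) / d -> 0 < c.
Proof.
move=> N_gt0 d_gt0 cN; rewrite ltr_pdivlMr // => lt_t.
have : 0 < c * N by rewrite cN; nra.
by rewrite pmulr_lgt0.
Qed.
End ShiftArith.

Lemma riesz_setE (R : realType) (n : nat) (H : set 'M[R]_n) (e : 'rV[R]_n) :
  riesz H e = ereal_sup (EFin @` [set s | H (1%:M - s *: Pe e)]).
Proof. by rewrite /riesz; under eq_set => t do rewrite riesz_testE. Qed.

Section RieszFdelta.
Variables (R : realType) (n : nat) (H : set 'M[R]_n) (d : R) (e : 'rV[R]_n).
Hypotheses (n_gt0 : (0 < n)%N) (e_unit : unit_vec e) (d_ge0 : 0 <= d)
  (H_cone : psd_monotone_cone H).

Let N : R := n%:R.
Let N_gt0 : 0 < N. Proof. by rewrite ltr0n. Qed.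
Let P := Pe e.
Let riesz_set := [set s | H (1%:M - s *: P)].
(* [I - t P] lies in [Fdelta H d] iff [coef t I - t P] lies in [H],
   since [tr (I - t P) = n - t]. *)
Let coef t := 1 + d * (N - t) / N.
Let cN t : coef t * N = N + d * (N - t).
Proof. by rewrite /coef; field; rewrite gt_eqF. Qed.

Let riesz_FdeltaE : riesz (Fdelta H d) e =
  ereal_sup (EFin @` [set t | H (coef t *: 1%:M - t *: P)]).
Proof.
rewrite riesz_setE; congr (ereal_sup (_ @` _)); apply: eq_set => t /=; congr H.
rewrite raddfB /= mxtraceZ mxtrace1 trace_Pe // mulr1 /coef scalerDl scale1r.
by rewrite addrAC.
Qed.

Let riesz_set0 : riesz_set 0.
Proof.
have [H0 H_add_psd _ _] := H_cone.
rewrite /riesz_set /= scale0r subr0 -[1%:M]add0r.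
exact: H_add_psd H0 psd1.
Qed.

Let riesz_set_le s s' : riesz_set s -> s' <= s -> riesz_set s'.
Proof.
have [_ H_add_psd _ _] := H_cone; move=> Hs le_s's.
rewrite /riesz_set /=.
have -> : 1%:M - s' *: P = (1%:M - s *: P) + (s - s') *: P.
  by rewrite scalerBl addrA subrK.
by apply: H_add_psd Hs _; apply: psd_scale_Pe; rewrite subr_ge0.
Qed.

Let riesz_set_lt s : (s%:E < riesz H e)%E -> riesz_set s.
Proof.
rewrite riesz_setE => /ereal_sup_EFin_gt[s' Hs' lt_ss'].
exact: riesz_set_le Hs' (ltW lt_ss').
Qed.

Let test_pos c t : 0 < c -> H (c *: 1%:M - t *: P) <-> riesz_set (t / c).
Proof.
have [_ _ H_scale _] := H_cone; move=> c_gt0.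
have c_neq0 : c != 0 by rewrite gt_eqF.
have -> : c *: 1%:M - t *: P = c *: (1%:M - (t / c) *: P).
  by rewrite scalerBr scalerA mulrC divfK.
split=> [|Hs]; last exact: H_scale.
by move/(H_scale c^-1); rewrite invr_gt0 scalerK //; apply.
Qed.

Let test_neg c t : c < 0 -> 0 <= t -> ~ H (c *: 1%:M - t *: P).
Proof.
have [_ H_add_psd H_scale Hm1] := H_cone; move=> c_lt0 t_ge0 Hct; apply: Hm1.
have : H (c *: 1%:M).
  by rewrite -(subrK (t *: P) (c *: _)); apply: H_add_psd Hct (psd_scale_Pe e t_ge0).
move/(H_scale (- c^-1)); rewrite oppr_gt0 invr_lt0 scalerA mulNr mulVf ?lt_eqF //.
by rewrite scaleN1r; apply.
Qed.

Let test_zero t : 0 < t -> H (- (t *: P)) -> forall s, riesz_set s.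
Proof.
have [_ H_add_psd H_scale _] := H_cone; move=> t_gt0 Ht s.
apply: (@riesz_set_le (`|s| + 1)); last by have := ler_norm s; lra.
have s1_gt0 : 0 < `|s| + 1 by have := normr_ge0 s; lra.
have := H_add_psd _ _ (H_scale _ _ (divr_gt0 s1_gt0 t_gt0) Ht) psd1.
by rewrite scalerN scalerA divfK ?gt_eqF // [- _ + _]addrC.
Qed.

Let shifted_test_cases t : H (coef t *: 1%:M - t *: P) ->
  (0 < coef t /\ riesz_set (t / coef t)) \/ (coef t = 0 /\ forall s, riesz_set s).
Proof.
move=> Ht; have := cN t; case: (ltgtP 0 (coef t)) => c_t cNt.
- by left; split=> //; apply/test_pos.
- exfalso; apply: (test_neg c_t) Ht; apply/ltW/(shift_factor_le0 N_gt0 d_ge0).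
  by rewrite -cNt; apply: ltW; rewrite pmulr_llt0.
- right; split=> //; rewrite -c_t scale0r sub0r in Ht; apply: test_zero Ht.
  by apply: (shift_factor_le0 N_gt0 d_ge0); rewrite -cNt -c_t mul0r.
Qed.

Lemma riesz_ge0 p : riesz H e = p%:E -> 0 <= p.
Proof. by rewrite riesz_setE => supH; apply: ereal_sup_EFin_ub supH riesz_set0. Qed.

Lemma riesz_Fdelta p : riesz H e = p%:E ->
  riesz (Fdelta H d) e = (N * (1 + d) * p / (N + d * p))%:E.
Proof.
move=> rieszH; have p_ge0 := riesz_ge0 rieszH.
have Ndp_gt0 : 0 < N + d * p by have := mulr_ge0 d_ge0 p_ge0; have := N_gt0; lra.
have riesz_set_ub s : riesz_set s -> s <= p.
  by move: rieszH; rewrite riesz_setE => /ereal_sup_EFin_ub; apply.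
rewrite riesz_FdeltaE; apply: ereal_sup_EFin_eq => t /= => [Ht|lt_t].
  rewrite ler_pdivlMr //; case: (shifted_test_cases Ht) => [[c_gt0 Hs]|[_ Hall]].
    apply: (le_shifted_ratio N_gt0 (cN t)).
    by rewrite -ler_pdivrMr //; apply: riesz_set_ub.
  by have := riesz_set_ub _ (Hall (p + 1)); rewrite gerDl ler10.
rewrite ltr_pdivlMr // in lt_t.
have [c_gt0 lt_tc] := lt_shifted_ratio N_gt0 d_ge0 p_ge0 (cN t) lt_t.
by apply/test_pos => //; apply: riesz_set_lt; rewrite rieszH lte_fin ltr_pdivrMr.
Qed.

Lemma riesz_Fdelta_pinfty : 0 < d -> riesz H e = +oo%E ->
  riesz (Fdelta H d) e = (N * (1 + d) / d)%:E.
Proof.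
move=> d_gt0 rieszH; rewrite riesz_FdeltaE; apply: ereal_sup_EFin_eq => t /=.
  move=> /shifted_test_cases[[c_gt0 _]|[c0 _]];
    apply: (le_shift_limit N_gt0 d_gt0 (cN t)); by [exact: ltW | rewrite c0].
move=> /(lt_shift_limit N_gt0 d_gt0 (cN t)) c_gt0.
by apply/test_pos => //; apply: riesz_set_lt; rewrite rieszH ltry.
Qed.
End RieszFdelta.

Theorem propositionA11 (R : realType) (n : nat) (F : set 'M[R]_n)
    (G : set 'M[R]_n) (delta : R) (e : 'rV[R]_n) :
  (0 < n)%N ->
  cone_subequation F ->
  orth_subgroup G -> transitive_sphere G -> invariant_under G F ->
  0 <= delta ->
  unit_vec e ->
  (forall p : R, riesz F e = p%:E ->
     riesz (Fdelta F delta) e = (n%:R * (1 + delta) * p / (n%:R + delta * p))%:E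
     /\ riesz (Fdelta F delta) e
        = (p + delta * p * (n%:R - p) / (n%:R + delta * p))%:E) /\
  (forall q : R, riesz (dual F) e = q%:E ->
     riesz (dual (Fdelta F delta)) e
       = (n%:R * (1 + delta) * q / (n%:R + delta * q))%:E
     /\ riesz (dual (Fdelta F delta)) e
       = (q + delta * q * (n%:R - q) / (n%:R + delta * q))%:E) /\
  (0 < delta -> riesz F e = +oo%E ->
     riesz (Fdelta F delta) e = (n%:R * (1 + delta) / delta)%:E) /\
  (0 < delta -> riesz (dual F) e = +oo%E ->
     riesz (dual (Fdelta F delta)) e = (n%:R * (1 + delta) / delta)%:E).
Proof.
(* The Riesz characteristic is taken along the given [e]. *)
move=> n_gt0 F_cone _ _ _ delta_ge0 e_unit.
have F_mono := cone_subequation_psd_monotone F_cone.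
have dualF_mono :=
  psd_monotone_cone_dual F_mono (cone_subequation_interior1 F_cone n_gt0).
have ratioE H p : psd_monotone_cone H -> riesz H e = p%:E ->
    n%:R * (1 + delta) * p / (n%:R + delta * p)
    = p + delta * p * (n%:R - p) / (n%:R + delta * p).
  move=> H_mono /(riesz_ge0 H_mono) p_ge0.
  have : 0 < n%:R + delta * p :> R by rewrite ltr_wpDr ?mulr_ge0 ?ltr0n.
  by move=> /lt0r_neq0 ?; field.
rewrite !(dual_Fdelta n_gt0 delta_ge0).
split; [|split; [|split]].
- move=> p rieszF; rewrite -(ratioE _ _ F_mono rieszF).
  by rewrite (riesz_Fdelta n_gt0 e_unit delta_ge0 F_mono rieszF).
- move=> q rieszF; rewrite -(ratioE _ _ dualF_mono rieszF).
  by rewrite (riesz_Fdelta n_gt0 e_unit delta_ge0 dualF_mono rieszF).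
- exact: riesz_Fdelta_pinfty.
- exact: riesz_Fdelta_pinfty.
Qed.
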